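(* Let $n$ be a non-negative integer. Then every subgroup of $\mathbb{R}^n$, equipped with the subspace topology inherited from the Euclidean topology, is $g$-reversible.
   Context: All topological groups are assumed Hausdorff. A topological group $G$ is called $g$-reversible if every continuous automorphism of $G$ (i.e. every continuous group isomorphism of $G$ onto itself) is an open map. $\mathbb{R}^n$ denotes the additive group with the Euclidean topology. *)

From Stdlib Require Import Reals.
Open Scope R_scope.

(* Points of R^n are represented as functions nat -> R whose coordinates
   of index >= n vanish (so distinct points of R^n are distinct functions). *)
Definition in_Rn (n : nat) (x : nat -> R) : Prop :=
  forall i : nat, (n <= i)%nat -> x i = 0.

Definition vadd (x y : nat -> R) : nat -> R := fun i => x i + y i.
Definition vopp (x : nat -> R) : nat -> R := fun i => - x i.
Definition vzero : nat -> R := fun _ => 0.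

Fixpoint rsum (n : nat) (f : nat -> R) : R :=
  match n with
  | O => 0
  | S k => rsum k f + f k
  end.

Definition edist (n : nat) (x y : nat -> R) : R :=
  sqrt (rsum n (fun i => (x i - y i) ^ 2)).

Definition is_subgroup_Rn (n : nat) (H : (nat -> R) -> Prop) : Prop :=
  (forall x, H x -> in_Rn n x) /\
  H vzero /\
  (forall x y, H x -> H y -> H (vadd x y)) /\
  (forall x, H x -> H (vopp x)).

Definition rel_open (n : nat) (H U : (nat -> R) -> Prop) : Prop :=
  (forall x, U x -> H x) /\
  (forall x, U x -> exists eps, 0 < eps /\
      forall y, H y -> edist n x y < eps -> U y).

Definition cont_automorphism (n : nat) (H : (nat -> R) -> Prop)
    (f : (nat -> R) -> (nat -> R)) : Prop :=
  (forall x, H x -> H (f x)) /\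
  (forall x y, H x -> H y -> f (vadd x y) = vadd (f x) (f y)) /\
  (forall x y, H x -> H y -> f x = f y -> x = y) /\
  (forall y, H y -> exists x, H x /\ f x = y) /\
  (forall x, H x -> forall eps, 0 < eps -> exists delta, 0 < delta /\
      forall y, H y -> edist n x y < delta -> edist n (f x) (f y) < eps).

Definition open_map_on (n : nat) (H : (nat -> R) -> Prop)
    (f : (nat -> R) -> (nat -> R)) : Prop :=
  forall U, rel_open n H U ->
    rel_open n H (fun y => exists x, U x /\ f x = y).

Definition g_reversible_sub (n : nat) (H : (nat -> R) -> Prop) : Prop :=
  forall f, cont_automorphism n H f -> open_map_on n H f.


(* A continuous automorphism f of a subgroup H of R^n is the restriction of a
   linear map.  Take a maximal linearly independent family b_1, ..., b_m in H
   and write h in H as h = sum_j c_j b_j.  By Dirichlet's simultaneous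
   approximation there are p >= 1 and integers z_j with every p c_j - z_j
   arbitrarily small; then p h - sum_j z_j b_j is a small element of H, so by
   continuity at 0 its image p f(h) - sum_j z_j f(b_j) is small, which forces
   f(h) = sum_j c_j f(b_j).  As f is onto, every b_j lies in the span of the
   f(b_j), which are therefore independent as well; hence the inverse of f is
   also the restriction of a linear map, thus Lipschitz, and f is open. *)

Set Warnings "-notation-overridden,-ambiguous-paths".
From Stdlib Require Import Reals FunctionalExtensionality Classical Lia.
From mathcomp Require Import all_boot all_order all_algebra.
From mathcomp Require Import Rstruct ring lra zify.
Import Order.TTheory GRing.Theory Num.Theory.
Local Open Scope ring_scope.

Section Dirichlet.
Context {R : archiRealFieldType}.

Definition frac (x : R) : R := x - (Num.floor x)%:~R.

Lemma frac_itv x : 0 <= frac x < 1.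
Proof.
have /andP[h1 h2] := floor_itv x; rewrite /frac intrD mulr1z in h2 *.
apply/andP; split; [rewrite subr_ge0 | rewrite ltrBlDl]; lra.
Qed.

Definition frac_cell N x : nat := Num.truncn (N.+1%:R * frac x).

Lemma frac_cell_lt N x : (frac_cell N x < N.+1)%N.
Proof.
have /andP[x0 x1] := frac_itv x.
by rewrite /frac_cell truncn_lt_nat ?mulr_ge0 // gtr_pMr // ltr0n.
Qed.

Lemma frac_close_of_cell_eq N x y :
  frac_cell N x = frac_cell N y -> `|frac x - frac y| <= N.+1%:R^-1.
Proof.
have N0 : 0 < N.+1%:R :> R by rewrite ltr0n.
have /andP[x0 _] := frac_itv x; have /andP[y0 _] := frac_itv y.
have /andP[lox hix] := truncn_itv (mulr_ge0 (ltW N0) x0).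
have /andP[loy hiy] := truncn_itv (mulr_ge0 (ltW N0) y0).
rewrite /frac_cell => e; rewrite -[_^-1]mul1r ler_pdivlMr //.
rewrite -(ger0_norm (ltW N0)) -normrM mulrC mulrBr ler_norml; move: lox hix; rewrite e.
move: (Num.truncn _) loy hiy => T; rewrite -!natr1 => *; apply/andP; split; lra.
Qed.

Lemma dirichlet_approximation m N (c : 'I_m -> R) :
  exists2 p : nat, (0 < p)%N &
    exists z : 'I_m -> int, forall j, `|p%:R * c j - (z j)%:~R| <= N.+1%:R^-1.
Proof.
pose cell (k : 'I_(N.+1 ^ m).+1) : {ffun 'I_m -> 'I_N.+1} :=
  [ffun j => inord (frac_cell N (k%:R * c j))].
have /injectivePn[k1 [k2 ne12 e12]] : ~~ injectiveb cell.
  apply/injectiveP => /leq_card; rewrite card_ffun !card_ord; lia.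
wlog lt12 : k1 k2 ne12 e12 / (k1 < k2)%N.
  move=> W; case: (ltngtP k1 k2) => [|lt21|/val_inj e]; first exact: W.
  - by apply: (W k2 k1); rewrite // eq_sym.
  - by rewrite e eqxx in ne12.
exists (k2 - k1)%N; first by rewrite subn_gt0.
exists (fun j => Num.floor (k2%:R * c j) - Num.floor (k1%:R * c j)) => j.
have -> : (k2 - k1)%:R * c j - (Num.floor (k2%:R * c j) - Num.floor (k1%:R * c j))%:~R
    = frac (k2%:R * c j) - frac (k1%:R * c j).
  by rewrite natrB 1?ltnW // intrB /frac; ring.
apply: frac_close_of_cell_eq.
have := congr1 (fun g : {ffun 'I_m -> 'I_N.+1} => val (g j)) e12.
by rewrite /= !ffunE !inordK ?frac_cell_lt.
Qed.

Lemma dirichlet_approximation_lt m (c : 'I_m -> R) (e : R) : 0 < e ->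
  exists2 p : nat, (0 < p)%N &
    exists z : 'I_m -> int, forall j, `|p%:R * c j - (z j)%:~R| < e.
Proof.
move=> e0; have [p p0 [z hz]] := dirichlet_approximation _ (Num.truncn e^-1) c.
exists p => //; exists z => j; apply: le_lt_trans (hz j) _.
by rewrite invf_plt ?posrE ?ltr0n // truncnS_gt.
Qed.
End Dirichlet.

Lemma norm_sum_mul_le (R : numDomainType) (I : finType) (u v : I -> R) t :
  (forall j, `|u j| <= t) -> `|\sum_j u j * v j| <= t * \sum_j `|v j|.
Proof.
move=> hu; rewrite mulr_sumr; apply: le_trans (ler_norm_sum _ _ _) _.
by apply: ler_sum => j _; rewrite normrM ler_wpM2r.
Qed.

Lemma sqrt_sum_sqr_le (R : rcfType) (I : Type) (r : seq I) (a : I -> R) :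
  Num.sqrt (\sum_(i <- r) a i ^+ 2) <= \sum_(i <- r) `|a i|.
Proof.
have s0 : 0 <= \sum_(i <- r) `|a i| by apply: sumr_ge0.
rewrite -(ger0_norm s0) -sqrtr_sqr ler_wsqrtr //; elim: r {s0} => [|i r IH].
  by rewrite !big_nil expr0n.
rewrite !big_cons; have : 0 <= \sum_(j <- r) `|a j| by apply: sumr_ge0.
by rewrite -(real_normK (num_real (a i))); have := normr_ge0 (a i); nra.
Qed.

Section SpanningFamily.
Context {K : fieldType} {n : nat} {T : Type} (phi : T -> 'rV[K]_n).

Definition fam_mx {m} (b : 'I_m -> T) : 'M[K]_(m, n) := \matrix_j phi (b j).

Definition fam_snoc {m} (b : 'I_m -> T) (x : T) : 'I_m.+1 -> T :=
  fun j => if unlift ord_max j is Some j' then b j' else x.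

Lemma row_free_snoc m (b : 'I_m -> T) x :
  row_free (fam_mx b) -> ~~ (phi x <= fam_mx b)%MS -> row_free (fam_mx (fam_snoc b x)).
Proof.
move=> /eqP rk nx; rewrite /row_free eqn_leq rank_leq_row /=.
have sub : (fam_mx b + phi x <= fam_mx (fam_snoc b x))%MS.
  rewrite addsmx_sub; apply/andP; split.
    apply/row_subP => j; rewrite rowK.
    have -> : phi (b j) = row (lift ord_max j) (fam_mx (fam_snoc b x)).
      by rewrite rowK /fam_snoc liftK.
    exact: row_sub.
  have -> : phi x = row ord_max (fam_mx (fam_snoc b x)).
    by rewrite rowK /fam_snoc unlift_none.
  exact: row_sub.
have lt : (fam_mx b < fam_mx b + phi x)%MS.
  by rewrite ltmxE addsmxSl; apply: contra nx; apply: submx_trans (addsmxSr _ _).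
by move: lt; rewrite ltmxErank rk => /andP[_ /leq_trans]; apply; apply: mxrankS.
Qed.

Lemma exists_spanning_row_free_family (P : T -> Prop) :
  exists m (b : 'I_m -> T), [/\ forall j, P (b j), row_free (fam_mx b) &
    forall x, P x -> (phi x <= fam_mx b)%MS].
Proof.
suff ext d m (b : 'I_m -> T) : (n - m)%N = d -> (forall j, P (b j)) ->
    row_free (fam_mx b) -> exists m (b : 'I_m -> T), [/\ forall j, P (b j),
      row_free (fam_mx b) & forall x, P x -> (phi x <= fam_mx b)%MS].
  apply: (ext _ 0%N (fun j => False_rect T (Bool.diff_false_true (ltn_ord j))));
    [done | by case | by rewrite /row_free -leqn0 rank_leq_row].
elim/ltn_ind: d m b => d IH m b dm Pb fb.
have [span|] := classic (forall x, P x -> (phi x <= fam_mx b)%MS).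
  by exists m, b.
move=> /not_all_ex_not[x /(imply_to_and (P x))[Px /negP nx]].
have free_snoc := row_free_snoc _ _ _ fb nx.
have := rank_leq_col (fam_mx (fam_snoc b x)); rewrite (eqP free_snoc) => mn.
apply: (IH _ _ _ (fam_snoc b x) erefl) => // [|j]; first lia.
by rewrite /fam_snoc; case: unlift.
Qed.

End SpanningFamily.

Lemma rsumE k (g : nat -> R) : rsum k g = \sum_(i < k) g i.
Proof.
elim: k => [|k IH] /=; first by rewrite big_ord0.
by rewrite big_ord_recr /= IH.
Qed.

Lemma edistE n (x y : nat -> R) :
  edist n x y = Num.sqrt (\sum_(i < n) (x i - y i) ^+ 2).
Proof.
rewrite /edist RsqrtE rsumE; congr Num.sqrt; apply: eq_bigr => i _.
by rewrite RpowE RminusE.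
Qed.

Lemma edist_ge0 n (x y : nat -> R) : 0 <= edist n x y.
Proof. by rewrite edistE sqrtr_ge0. Qed.

Lemma norm_coord_le_edist n (x y : nat -> R) (i : 'I_n) :
  `|x i - y i| <= edist n x y.
Proof.
rewrite edistE -sqrtr_sqr ler_wsqrtr // (bigD1 i) //= lerDl.
by apply: sumr_ge0 => j _; rewrite sqr_ge0.
Qed.

Lemma edist_le_sum_norm n (x y : nat -> R) :
  edist n x y <= \sum_(i < n) `|x i - y i|.
Proof. by rewrite edistE sqrt_sum_sqr_le. Qed.

Definition rv n (x : nat -> R) : 'rV[R]_n := \row_(i < n) x i.

Lemma edist_mulmx_le n (P : 'M[R]_n) x y x' y' :
  rv n x - rv n y = (rv n x' - rv n y') *m P ->
  edist n x y <= edist n x' y' * \sum_(i < n) \sum_(j < n) `|P j i|.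
Proof.
move=> exy; apply: le_trans (edist_le_sum_norm _ _ _) _.
rewrite mulr_sumr; apply: ler_sum => i _.
have := congr1 (fun w : 'rV_n => w 0 i) exy; rewrite !mxE => ->.
by apply: norm_sum_mul_le => j; rewrite !mxE; apply: norm_coord_le_edist.
Qed.

Lemma open_map_of_linear_inverse n H f (P : 'M[R]_n) :
  (forall x, H x -> H (f x)) -> (forall y, H y -> exists x, H x /\ f x = y) ->
  (forall x, H x -> rv n x = rv n (f x) *m P) -> open_map_on n H f.
Proof.
move=> fH surj inv U [UH Uopen]; split=> [_ [x [Ux <-]]|_ [x0 [Ux0 <-]]].
  exact/fH/UH.
have [eps [/RltP eps0 epsU]] := Uopen x0 Ux0.
pose SP := \sum_(i < n) \sum_(j < n) `|P j i|.
have SP0 : 0 <= SP by do 2!apply: sumr_ge0 => ? _.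
have SP1 : 0 < SP + 1 by lra.
exists (eps / (SP + 1)); split; first exact/RltP/divr_gt0.
move=> _ /surj[x [Hx <-]] /RltP dfx; exists x; split => //; apply/epsU/RltP => //.
apply: le_lt_trans (edist_mulmx_le _ _ _ _ _ _ _) _.
  by rewrite (inv x0 (UH _ Ux0)) (inv x Hx) mulmxBl.
have := edist_ge0 n (f x0) (f x); have := divfK (lt0r_neq0 SP1) eps.
by move: (eps / _) dfx => eta; rewrite -/SP; nra.
Qed.

Definition vzscale (z : int) (x : nat -> R) : nat -> R := fun i => z%:~R * x i.

Lemma vzscale0 x : vzscale 0 x = vzero.
Proof. by apply: functional_extensionality => i; rewrite /vzscale mul0r. Qed.

Lemma vzscaleS (k : nat) x : vzscale k.+1 x = vadd (vzscale k x) x.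
Proof.
apply: functional_extensionality => i.
by rewrite /vzscale /vadd RplusE -!pmulrn mulrSr mulrDl mul1r.
Qed.

Lemma vzscaleNegz (k : nat) x : vzscale (Negz k) x = vopp (vzscale k.+1 x).
Proof.
by apply: functional_extensionality => i; rewrite /vzscale /vopp RoppE NegzE intrN mulNr.
Qed.

Section ContinuousAutomorphism.
Variables (n : nat) (H : (nat -> R) -> Prop) (f : (nat -> R) -> nat -> R).
Hypotheses (subH : is_subgroup_Rn n H) (autf : cont_automorphism n H f).

Lemma subgroup0 : H vzero. Proof. by case: subH => _ []. Qed.

Lemma subgroupD {x y} : H x -> H y -> H (vadd x y).
Proof. by case: subH => _ [_ [hD _]]; apply: hD. Qed.

Lemma subgroupN {x} : H x -> H (vopp x).
Proof. by case: subH => _ [_ [_ hN]]; apply: hN. Qed.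

Lemma autoD {x y} : H x -> H y -> f (vadd x y) = vadd (f x) (f y).
Proof. by case: autf => _ [hD _]; apply: hD. Qed.

Lemma auto0 : f vzero = vzero.
Proof.
have e : vadd vzero vzero = vzero.
  by apply: functional_extensionality => i; rewrite /vadd /vzero RplusE addr0.
apply: functional_extensionality => i.
have := congr1 (fun g => g i) (autoD subgroup0 subgroup0).
by rewrite e /vadd /vzero RplusE R0E; lra.
Qed.

Lemma autoN {x} : H x -> f (vopp x) = vopp (f x).
Proof.
move=> Hx; have e : vadd x (vopp x) = vzero.
  by apply: functional_extensionality => i; rewrite /vadd /vopp /vzero RplusE RoppE subrr.
apply: functional_extensionality => i.
have := congr1 (fun g => g i) (autoD Hx (subgroupN Hx)).
by rewrite e auto0 /vadd /vopp /vzero RplusE RoppE R0E; lra.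
Qed.

Lemma subgroupZ z {x} : H x -> H (vzscale z x).
Proof.
have subgroupZn (k : nat) : H x -> H (vzscale k x).
  move=> Hx; elim: k => [|k IH]; first by rewrite vzscale0; apply: subgroup0.
  by rewrite vzscaleS; apply: subgroupD.
case: z => k Hx; rewrite ?vzscaleNegz; first exact: subgroupZn.
exact/subgroupN/subgroupZn.
Qed.

Lemma autoZ z {x} : H x -> f (vzscale z x) = vzscale z (f x).
Proof.
have autoZn (k : nat) : H x -> f (vzscale k x) = vzscale k (f x).
  move=> Hx; elim: k => [|k IH]; first by rewrite !vzscale0 auto0.
  by rewrite !vzscaleS autoD ?IH //; apply: subgroupZ.
case: z => k Hx; rewrite ?vzscaleNegz; first exact: autoZn.
by rewrite autoN ?autoZn //; apply: subgroupZ.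
Qed.

Lemma auto_int_comb m (z : 'I_m -> int) (b : 'I_m -> nat -> R) :
  (forall j, H (b j)) -> exists y, [/\ H y,
    forall i, y i = \sum_(j < m) (z j)%:~R * b j i &
    forall i, f y i = \sum_(j < m) (z j)%:~R * f (b j) i].
Proof.
elim: m z b => [|m IH] z b Hb.
  by exists vzero; rewrite auto0; split => [|i|i]; rewrite ?big_ord0 //; apply: subgroup0.
pose w := widen_ord (leqnSn m).
have [y [Hy ey efy]] := IH (z \o w) (b \o w) (fun j => Hb (w j)).
have Hzb := subgroupZ (z ord_max) (Hb ord_max).
exists (vadd y (vzscale (z ord_max) (b ord_max))).
split => [|i|i]; first exact: subgroupD.
  by rewrite big_ord_recr /vadd RplusE ey.
by rewrite autoD // autoZ // big_ord_recr /vadd RplusE efy.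
Qed.

Lemma auto_cont0 (eps : R) : 0 < eps -> exists2 d : R, 0 < d &
  forall y, H y -> edist n vzero y < d -> edist n vzero (f y) < eps.
Proof.
move=> /RltP eps0; case: autf => _ [_ [_ [_ cont]]].
have [d [/RltP d0 hd]] := cont _ subgroup0 _ eps0.
by exists d => // y Hy /RltP dy; rewrite -auto0; apply/RltP/hd.
Qed.

Lemma auto_dirichlet_comb m (b : 'I_m -> nat -> R) (c : 'I_m -> R) h (e : R) :
  (forall j, H (b j)) -> H h -> 0 < e ->
  exists p : nat, exists del : 'I_m -> R, exists r, [/\ (0 < p)%N, H r,
    forall j, `|del j| < e,
    forall k, r k = p%:R * (h k - \sum_(j < m) c j * b j k) + \sum_(j < m) del j * b j k &
    forall k, f r k = p%:R * (f h k - \sum_(j < m) c j * f (b j) k)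
                      + \sum_(j < m) del j * f (b j) k].
Proof.
move=> Hb Hh e0; have [p p0 [z hz]] := dirichlet_approximation_lt _ c _ e0.
have [y [Hy ey efy]] := auto_int_comb _ z b Hb.
exists p, (fun j => p%:R * c j - (z j)%:~R), (vadd (vzscale p h) (vopp y)).
have Hph : H (vzscale p h) by apply: subgroupZ.
have comb_eq (u : 'I_m -> R) (w : R) :
    p%:~R * w + - \sum_(j < m) (z j)%:~R * u j =
    p%:R * (w - \sum_(j < m) c j * u j) + \sum_(j < m) (p%:R * c j - (z j)%:~R) * u j.
  rewrite -pmulrn mulrBr mulr_sumr -addrA -!sumrN -big_split /=; congr (_ + _).
  by apply: eq_bigr => j _ /=; ring.
split=> // [|k|k]; first exact: subgroupD (subgroupN Hy).
  by rewrite /vadd /vopp /vzscale RplusE RoppE ey comb_eq.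
rewrite autoD ?autoN ?autoZ //; last exact: subgroupN.
by rewrite /vadd /vopp /vzscale RplusE RoppE efy comb_eq.
Qed.

Lemma auto_real_comb m (b : 'I_m -> nat -> R) (c : 'I_m -> R) h (i : 'I_n) :
  (forall j, H (b j)) -> H h -> (forall k : 'I_n, h k = \sum_(j < m) c j * b j k) ->
  f h i = \sum_(j < m) c j * f (b j) i.
Proof.
move=> Hb Hh eh; apply/eqP; rewrite -subr_eq0 -normr_le0.
apply/ler_addgt0Pr => eps eps0; rewrite add0r.
have [d d0 hd] := auto_cont0 _ (divr_gt0 eps0 (ltr0Sn _ 1)).
pose SB := \sum_(k < n) \sum_(j < m) `|b j k|.
pose SF := \sum_(j < m) `|f (b j) i|.
have SB0 : 0 <= SB by do 2!apply: sumr_ge0 => ? _.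
have SF0 : 0 <= SF by apply: sumr_ge0.
have [e e0 [eSB eSF]] : exists2 e, 0 < e & e * SB < d /\ e * SF <= eps / 2.
  pose mu := Num.min d (eps / 2).
  have [mud mue] : mu <= d /\ mu <= eps / 2 by rewrite !ge_min !lexx ?orbT.
  have mu0 : 0 < mu by rewrite lt_min d0 divr_gt0.
  have S0 : 0 < SB + SF + 1 by lra.
  exists (mu / (SB + SF + 1)); first exact: divr_gt0.
  have := divfK (lt0r_neq0 S0) mu; have := divr_gt0 mu0 S0.
  by move: (mu / _) => e e0 emu; split; nra.
have [p [del [r [p0 Hr hdel er efr]]]] := auto_dirichlet_comb _ b c _ _ Hb Hh e0.
have r_small : edist n vzero r < d.
  apply: le_lt_trans (edist_le_sum_norm _ _ _) (le_lt_trans _ eSB).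
  rewrite mulr_sumr; apply: ler_sum => k _.
  rewrite /vzero R0E sub0r normrN er eh subrr mulr0 add0r.
  by apply: norm_sum_mul_le => j; exact: ltW.
have fr_small : `|f r i| < eps / 2.
  apply: le_lt_trans (hd r Hr r_small).
  by have := norm_coord_le_edist n vzero (f r) i; rewrite /vzero R0E sub0r normrN.
have del_small : `|\sum_(j < m) del j * f (b j) i| <= eps / 2.
  by apply: le_trans eSF; apply: norm_sum_mul_le => j; exact: ltW.
have : `|p%:R * (f h i - \sum_(j < m) c j * f (b j) i)| <= eps.
  rewrite -[_ * _](addrK (\sum_(j < m) del j * f (b j) i)) -efr.
  by apply: le_trans (ler_normB _ _) _; lra.
rewrite normrM ger0_norm // => pX; apply: le_trans pX.
by apply: ler_peMl; rewrite ?normr_ge0 // ler1n.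
Qed.

Lemma auto_linear_inverse :
  exists P : 'M[R]_n, forall x, H x -> rv n x = rv n (f x) *m P.
Proof.
have [_ [_ [_ [surj _]]]] := autf.
have [m [b [Hb free span]]] := exists_spanning_row_free_family (rv n) H.
set B := fam_mx (rv n) b; set F := fam_mx (rv n) (f \o b).
have auto_mulmx x c : H x -> c *m B = rv n x -> c *m F = rv n (f x).
  move=> Hx cB; apply/rowP => i; rewrite !mxE.
  rewrite (auto_real_comb _ b (fun j => c 0 j) x i) //.
    by apply: eq_bigr => j _; rewrite !mxE.
  move=> k; have := congr1 (fun w : 'rV_n => w 0 k) cB; rewrite !mxE => <-.
  by apply: eq_bigr => j _; rewrite !mxE.
have BF : (B <= F)%MS.
  apply/row_subP => j; have [x [Hx fx]] := surj _ (Hb j).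
  rewrite rowK -fx -(auto_mulmx x (rv n x *m pinvmx B)) ?mulmxKpV ?span //.
  exact: submxMl.
have freeF : row_free F.
  by rewrite /row_free eqn_leq rank_leq_row -{1}(eqP free) mxrankS.
exists (pinvmx F *m B) => x Hx.
by rewrite mulmxA -(auto_mulmx x (rv n x *m pinvmx B)) ?mulmxKp ?mulmxKpV ?span.
Qed.

End ContinuousAutomorphism.

Theorem theorem5p6 (n : nat) (H : (nat -> R) -> Prop) :
  is_subgroup_Rn n H -> g_reversible_sub n H.
Proof.
move=> subH f autf; have [fH [_ [_ [surj _]]]] := autf.
have [P inv] := auto_linear_inverse _ _ _ subH autf.
exact: open_map_of_linear_inverse fH surj inv.
Qed.
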